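(* Let $(D,\prec,\succ,\alpha)$ be a Hom-dendriform algebra and $T:D\to D$ a homomorphic averaging operator. Define on $D$: $\prec_\perp=\prec$, $\succ_\perp=\succ$, $x\prec^T_\vdash y=Tx\prec y$, $x\prec^T_\dashv y=x\prec Ty$, $x\succ^T_\vdash y=Tx\succ y$, $x\succ^T_\dashv y=x\succ Ty$ for $x,y\in D$. Then $(D,\prec_\perp,\succ_\perp,\prec^T_\vdash,\prec^T_\dashv,\succ^T_\vdash,\succ^T_\dashv,\alpha)$ is a Hom-six-dendriform algebra.
   Context: All vector spaces are over a field of characteristic zero. A Hom-dendriform algebra is $(D,\prec,\succ,\alpha)$ with $\prec,\succ$ bilinear and $\alpha$ linear such that for all $x,y,z$: $\alpha(x)\prec(y\prec z+y\succ z)=(x\prec y)\prec\alpha(z)$; $\alpha(x)\succ(y\prec z)=(x\succ y)\prec\alpha(z)$; $\alpha(x)\succ(y\succ z)=(x\prec y+x\succ y)\succ\alpha(z)$. A homomorphic averaging operator on $(D,\prec,\succ,\alpha)$ is a linear map $T:D\to D$ such that for all $x,y\in D$: $Tx\prec Ty=T(Tx\prec y)=T(x\prec Ty)$, $Tx\succ Ty=T(Tx\succ y)=T(x\succ Ty)$, $T\circ\alpha=\alpha\circ T$, and $T(x\prec y)=Tx\prec Ty$, $T(x\succ y)=Tx\succ Ty$. A Hom-quadri-dendriform algebra is $(E,\prec_\vdash,\prec_\dashv,\succ_\vdash,\succ_\dashv,\gamma)$ with four bilinear operations and $\gamma$ linear such that for all $x,y,z$: (Q1) $(x\prec_\vdash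 y)\prec_\vdash\gamma(z)=(x\prec_\dashv y)\prec_\vdash\gamma(z)=\gamma(x)\prec_\vdash(y\prec_\vdash z+y\succ_\vdash z)$; (Q2) $(x\succ_\vdash y)\prec_\vdash\gamma(z)=(x\succ_\dashv y)\prec_\vdash\gamma(z)=\gamma(x)\succ_\vdash(y\prec_\vdash z)$; (Q3) $\gamma(x)\succ_\vdash(y\succ_\vdash z)=(x\prec_\vdash y+x\succ_\vdash y)\succ_\vdash\gamma(z)=(x\prec_\dashv y+x\succ_\dashv y)\succ_\vdash\gamma(z)$; (Q4) $\gamma(x)\succ_\vdash(y\succ_\vdash z)=(x\prec_\dashv y+x\succ_\vdash y)\succ_\vdash\gamma(z)=(x\prec_\vdash y+x\succ_\dashv y)\succ_\vdash\gamma(z)$; (Q5) $(x\prec_\vdash y)\prec_\dashv\gamma(z)=\gamma(x)\prec_\vdash(y\prec_\dashv z+y\succ_\dashv z)$; (Q6) $(x\succ_\vdash y)\prec_\dashv\gamma(z)=\gamma(x)\succ_\vdash(y\prec_\dashv z)$; (Q7) $\gamma(x)\succ_\vdash(y\succ_\dashv z)=(x\prec_\vdash y+x\succ_\vdash y)\succ_\dashv\gamma(z)$; (Q8) $(x\prec_\dashv y)\prec_\dashv\gamma(z)=\gamma(x)\prec_\dashv(y\prec_\vdash z+y\succ_\vdash z)=\gamma(x)\prec_\dashv(y\prec_\dashv z+y\succ_\dashv z)$; (Q9) $(x\prec_\dashv y)\prec_\dashv\gamma(z)=\gamma(x)\prec_\dashv(y\prec_\vdash z+y\succ_\dashv z)=\gamma(x)\prec_\dashv(y\prec_\dashv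 z+y\succ_\vdash z)$; (Q10) $(x\succ_\dashv y)\prec_\dashv\gamma(z)=\gamma(x)\succ_\dashv(y\prec_\vdash z)=\gamma(x)\succ_\dashv(y\prec_\dashv z)$; (Q11) $\gamma(x)\succ_\dashv(y\succ_\vdash z)=\gamma(x)\succ_\dashv(y\succ_\dashv z)=(x\prec_\dashv y+x\succ_\dashv y)\succ_\dashv\gamma(z)$. A Hom-six-dendriform algebra is $(E,\prec_\perp,\succ_\perp,\prec_\vdash,\prec_\dashv,\succ_\vdash,\succ_\dashv,\gamma)$ such that $(E,\prec_\perp,\succ_\perp,\gamma)$ is Hom-dendriform, $(E,\prec_\vdash,\prec_\dashv,\succ_\vdash,\succ_\dashv,\gamma)$ is Hom-quadri-dendriform, and for all $x,y,z$: (S1) $(x\prec_\vdash y)\prec_\perp\gamma(z)=\gamma(x)\prec_\vdash(y\prec_\perp z+y\succ_\perp z)$; (S2) $(x\succ_\vdash y)\prec_\perp\gamma(z)=\gamma(x)\succ_\vdash(y\prec_\perp z)$; (S3) $\gamma(x)\succ_\vdash(y\succ_\perp z)=(x\prec_\vdash y+x\succ_\vdash y)\succ_\perp\gamma(z)$; (S4) $(x\prec_\dashv y)\prec_\perp\gamma(z)=\gamma(x)\prec_\perp(y\prec_\vdash z+y\succ_\vdash z)$; (S5) $(x\succ_\dashv y)\prec_\perp\gamma(z)=\gamma(x)\succ_\perp(y\prec_\vdash z)$; (S6) $\gamma(x)\succ_\perp(y\succ_\vdash z)=(x\prec_\dashv y+x\succ_\dashv y)\succ_\perp\gamma(z)$;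 (S7) $(x\prec_\perp y)\prec_\dashv\gamma(z)=\gamma(x)\prec_\perp(y\prec_\dashv z+y\succ_\dashv z)$; (S8) $(x\succ_\perp y)\prec_\dashv\gamma(z)=\gamma(x)\succ_\perp(y\prec_\dashv z)$; (S9) $\gamma(x)\succ_\perp(y\succ_\dashv z)=(x\prec_\perp y+x\succ_\perp y)\succ_\dashv\gamma(z)$; (S10) $(x\prec_\perp y)\prec_\vdash\gamma(z)=(x\prec_\vdash y)\prec_\vdash\gamma(z)=(x\prec_\dashv y)\prec_\vdash\gamma(z)$; (S11) $(x\succ_\perp y)\prec_\vdash\gamma(z)=(x\succ_\vdash y)\prec_\vdash\gamma(z)=(x\succ_\dashv y)\prec_\vdash\gamma(z)$; (S12) $(x\prec_\perp y)\succ_\vdash\gamma(z)=(x\prec_\vdash y)\succ_\vdash\gamma(z)=(x\prec_\dashv y)\succ_\vdash\gamma(z)$; (S13) $(x\succ_\perp y)\succ_\vdash\gamma(z)=(x\succ_\vdash y)\succ_\vdash\gamma(z)=(x\succ_\dashv y)\succ_\vdash\gamma(z)$; (S14) $\gamma(x)\prec_\dashv(y\prec_\perp z)=\gamma(x)\prec_\dashv(y\prec_\vdash z)=\gamma(x)\prec_\dashv(y\prec_\dashv z)$; (S15) $\gamma(x)\succ_\dashv(y\prec_\perp z)=\gamma(x)\succ_\dashv(y\prec_\vdash z)=\gamma(x)\succ_\dashv(y\prec_\dashv z)$; (S16) $\gamma(x)\succ_\dashv(y\succ_\perp z)=\gamma(x)\succ_\dashv(y\succ_\vdash z)=\gamma(x)\succ_\dashv(y\succ_\dashv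 z)$; (S17) $\gamma(x)\prec_\dashv(y\succ_\perp z)=\gamma(x)\prec_\dashv(y\succ_\vdash z)=\gamma(x)\prec_\dashv(y\succ_\dashv z)$. *)

From mathcomp Require Import all_boot all_algebra.
Set Implicit Arguments. Unset Strict Implicit. Unset Printing Implicit Defensive.
Import GRing.Theory.
Local Open Scope ring_scope.

Section Defs.
Variables (F : fieldType) (V : lmodType F).

Definition bilinear_op (m : V -> V -> V) : Prop :=
  (forall y, linear (fun x => m x y)) /\ (forall x, linear (m x)).

Definition is_hom_dendriform (prec succ : V -> V -> V) (alpha : V -> V) : Prop :=
  [/\ bilinear_op prec, bilinear_op succ, linear alpha &
   forall x y z,
   [/\ prec (alpha x) (prec y z + succ y z) = prec (prec x y) (alpha z),
       succ (alpha x) (prec y z) = prec (succ x y) (alpha z) &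
       succ (alpha x) (succ y z) = succ (prec x y + succ x y) (alpha z)]].

Definition is_hom_averaging (prec succ : V -> V -> V) (alpha T : V -> V) : Prop :=
  [/\ linear T,
   (forall x y, prec (T x) (T y) = T (prec (T x) y) /\ T (prec (T x) y) = T (prec x (T y))),
   (forall x y, succ (T x) (T y) = T (succ (T x) y) /\ T (succ (T x) y) = T (succ x (T y))),
   forall x, T (alpha x) = alpha (T x) &
   forall x y, T (prec x y) = prec (T x) (T y) /\ T (succ x y) = succ (T x) (T y)].

(* Hom-quadri-dendriform algebra (E, <|-, <-|, >|-, >-|, gamma) ;
   pv = prec_vdash, pd = prec_dashv, sv = succ_vdash, sd = succ_dashv *)
Definition is_hom_quadri_dendriform (pv pd sv sd : V -> V -> V) (g : V -> V) : Prop :=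
  [/\ bilinear_op pv, bilinear_op pd, bilinear_op sv, bilinear_op sd &
   linear g /\
   forall x y z,
   ( pv (pv x y) (g z) = pv (pd x y) (g z) /\
                pv (pd x y) (g z) = pv (g x) (pv y z + sv y z) /\
       pv (sv x y) (g z) = pv (sd x y) (g z) /\
                pv (sd x y) (g z) = sv (g x) (pv y z) /\
       sv (g x) (sv y z) = sv (pv x y + sv x y) (g z) /\
                sv (pv x y + sv x y) (g z) = sv (pd x y + sd x y) (g z) /\
       sv (g x) (sv y z) = sv (pd x y + sv x y) (g z) /\
                sv (pd x y + sv x y) (g z) = sv (pv x y + sd x y) (g z) /\
       pd (pv x y) (g z) = pv (g x) (pd y z + sd y z) /\
       pd (sv x y) (g z) = sv (g x) (pd y z) /\
       sv (g x) (sd y z) = sd (pv x y + sv x y) (g z) /\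
       pd (pd x y) (g z) = pd (g x) (pv y z + sv y z) /\
                pd (g x) (pv y z + sv y z) = pd (g x) (pd y z + sd y z) /\
       pd (pd x y) (g z) = pd (g x) (pv y z + sd y z) /\
                pd (g x) (pv y z + sd y z) = pd (g x) (pd y z + sv y z) /\
       pd (sd x y) (g z) = sd (g x) (pv y z) /\
                 sd (g x) (pv y z) = sd (g x) (pd y z) /\
       sd (g x) (sv y z) = sd (g x) (sd y z) /\
                 sd (g x) (sd y z) = sd (pd x y + sd x y) (g z))].

Definition is_hom_six_dendriform (pp sp pv pd sv sd : V -> V -> V) (g : V -> V) : Prop :=
  [/\ is_hom_dendriform pp sp g,
      is_hom_quadri_dendriform pv pd sv sd g &
   forall x y z,
   ( pp (pv x y) (g z) = pv (g x) (pp y z + sp y z) /\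
       pp (sv x y) (g z) = sv (g x) (pp y z) /\
       sv (g x) (sp y z) = sp (pv x y + sv x y) (g z) /\
       pp (pd x y) (g z) = pp (g x) (pv y z + sv y z) /\
       pp (sd x y) (g z) = sp (g x) (pv y z) /\
       sp (g x) (sv y z) = sp (pd x y + sd x y) (g z) /\
       pd (pp x y) (g z) = pp (g x) (pd y z + sd y z) /\
       pd (sp x y) (g z) = sp (g x) (pd y z) /\
       sp (g x) (sd y z) = sd (pp x y + sp x y) (g z) /\
   ( pv (pp x y) (g z) = pv (pv x y) (g z) /\ pv (pv x y) (g z) = pv (pd x y) (g z) /\
       pv (sp x y) (g z) = pv (sv x y) (g z) /\ pv (sv x y) (g z) = pv (sd x y) (g z) /\
       sv (pp x y) (g z) = sv (pv x y) (g z) /\ sv (pv x y) (g z) = sv (pd x y) (g z) /\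
       sv (sp x y) (g z) = sv (sv x y) (g z) /\ sv (sv x y) (g z) = sv (sd x y) (g z) /\
       pd (g x) (pp y z) = pd (g x) (pv y z) /\ pd (g x) (pv y z) = pd (g x) (pd y z) /\
       sd (g x) (pp y z) = sd (g x) (pv y z) /\ sd (g x) (pv y z) = sd (g x) (pd y z) /\
       sd (g x) (sp y z) = sd (g x) (sv y z) /\ sd (g x) (sv y z) = sd (g x) (sd y z) /\
       pd (g x) (sp y z) = pd (g x) (sv y z) /\ pd (g x) (sv y z) = pd (g x) (sd y z)))].

End Defs.

(** Every Hom-six-dendriform axiom for the operations built from [T] reduces
    to one of the three Hom-dendriform axioms.  Indeed [T] sends each of
    [x prec y], [Tx prec y], [x prec Ty] to [Tx prec Ty] (likewise for [succ])
    and commutes with [alpha]; once [T] is pushed inside in this way, each side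
    of each axiom is a side of a Hom-dendriform axiom evaluated at arguments
    among [x, Tx, y, Ty, z, Tz]. *)
From mathcomp Require Import all_boot all_algebra.
Set Implicit Arguments. Unset Strict Implicit. Unset Printing Implicit Defensive.
Import GRing.Theory.
Local Open Scope ring_scope.

Section LinearMaps.
Variables (F : fieldType) (V : lmodType F).

Lemma linear_additive (f : V -> V) : linear f -> {morph f : u v / u + v}.
Proof. by move=> lf u v; have := lf 1 u v; rewrite !scale1r. Qed.

Lemma bilinear_op_compl (f : V -> V) (m : V -> V -> V) :
  linear f -> bilinear_op m -> bilinear_op (fun x y => m (f x) y).
Proof. by move=> lf [ml mr]; split=> [y|x] a u v /=; rewrite ?lf ?ml ?mr. Qed.

Lemma bilinear_op_compr (f : V -> V) (m : V -> V -> V) :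
  linear f -> bilinear_op m -> bilinear_op (fun x y => m x (f y)).
Proof. by move=> lf [ml mr]; split=> [y|x] a u v /=; rewrite ?lf ?ml ?mr. Qed.

End LinearMaps.

Section HomomorphicAveraging.
Variables (F : fieldType) (V : lmodType F).
Variables (prec succ : V -> V -> V) (alpha T : V -> V).
Hypothesis hD : is_hom_dendriform prec succ alpha.
Hypothesis hT : is_hom_averaging prec succ alpha T.

Lemma dendriform_precA x y z :
  prec (alpha x) (prec y z + succ y z) = prec (prec x y) (alpha z).
Proof. by case: hD => _ _ _ /(_ x y z) []. Qed.

Lemma dendriform_succ_precA x y z :
  succ (alpha x) (prec y z) = prec (succ x y) (alpha z).
Proof. by case: hD => _ _ _ /(_ x y z) []. Qed.

Lemma dendriform_succA x y z :
  succ (alpha x) (succ y z) = succ (prec x y + succ x y) (alpha z).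
Proof. by case: hD => _ _ _ /(_ x y z) []. Qed.

Lemma averagingD : {morph T : u v / u + v}.
Proof. by case: hT => /linear_additive. Qed.

Lemma averaging_alpha x : T (alpha x) = alpha (T x).
Proof. by case: hT. Qed.

Lemma averaging_precTl x y : T (prec (T x) y) = prec (T x) (T y).
Proof. by case: hT => _ /(_ x y) []. Qed.

Lemma averaging_precTr x y : T (prec x (T y)) = prec (T x) (T y).
Proof. by case: hT => _ /(_ x y) [-> ->]. Qed.

Lemma averaging_succTl x y : T (succ (T x) y) = succ (T x) (T y).
Proof. by case: hT => _ _ /(_ x y) []. Qed.

Lemma averaging_succTr x y : T (succ x (T y)) = succ (T x) (T y).
Proof. by case: hT => _ _ /(_ x y) [-> ->]. Qed.

Lemma averaging_prec x y : T (prec x y) = prec (T x) (T y).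
Proof. by case: hT => _ _ _ _ /(_ x y) []. Qed.

Lemma averaging_succ x y : T (succ x y) = succ (T x) (T y).
Proof. by case: hT => _ _ _ _ /(_ x y) []. Qed.

(* The [Tl]/[Tr] rules must come before [averaging_prec]/[averaging_succ],
   which would otherwise turn [T (prec (T x) y)] into [prec (T (T x)) (T y)]. *)
Definition averagingE := (averagingD, averaging_alpha,
  averaging_precTl, averaging_precTr, averaging_succTl, averaging_succTr,
  averaging_prec, averaging_succ).

Definition dendriformE :=
  (dendriform_precA, dendriform_succ_precA, dendriform_succA).

Lemma bilinear_op_averaging :
  [/\ bilinear_op (fun x y => prec (T x) y), bilinear_op (fun x y => prec x (T y)),
      bilinear_op (fun x y => succ (T x) y) & bilinear_op (fun x y => succ x (T y))].
Proof.
by case: hD hT => bp bs _ _ [lT _ _ _ _]; split;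
  [apply: bilinear_op_compl | apply: bilinear_op_compr
  | apply: bilinear_op_compl | apply: bilinear_op_compr].
Qed.

Lemma hom_quadri_dendriform_averaging :
  is_hom_quadri_dendriform (fun x y => prec (T x) y) (fun x y => prec x (T y))
    (fun x y => succ (T x) y) (fun x y => succ x (T y)) alpha.
Proof.
have [bpv bpd bsv bsd] := bilinear_op_averaging.
split=> //; split=> [|x y z]; first by case: hD.
by rewrite !averagingE; do !split; rewrite ?dendriformE.
Qed.

End HomomorphicAveraging.

Theorem corollary4p9 (F : fieldType) (V : lmodType F)
  (hchar : [pchar F] =i pred0)
  (prec succ : V -> V -> V) (alpha T : V -> V) :
  is_hom_dendriform prec succ alpha ->
  is_hom_averaging prec succ alpha T ->
  is_hom_six_dendriform prec succ
    (fun x y => prec (T x) y) (fun x y => prec x (T y))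
    (fun x y => succ (T x) y) (fun x y => succ x (T y)) alpha.
Proof.
move=> hD hT; split=> //; first exact: hom_quadri_dendriform_averaging.
move=> x y z; rewrite !(averagingE hT).
by do !split; rewrite ?(dendriformE hD).
Qed.
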